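(* Suppose that $\mathbf{unif}<\mathbf{b}$. Then there exists a nonprincipal filter on $\omega$ which is meager but not Lebesgue measurable (as a subset of $2^\omega$).
   Context: $\mathbf{b}$ is the smallest size of a family of functions in $\omega^\omega$ that is unbounded with respect to eventual domination; $\mathbf{unif}$ is the smallest size of a non-measurable (equivalently, not measure zero) subset of $2^\omega$. A filter on $\omega$ is identified with the set of characteristic functions of its elements, a subset of $2^\omega$, which carries the product topology and the standard product (Lebesgue) measure. *)

From HB Require Import structures.
From mathcomp Require Import all_boot all_order all_algebra.
From mathcomp Require Import all_classical all_reals all_analysis.
From mathcomp Require Import Rstruct Rstruct_topology.
Set Implicit Arguments. Unset Strict Implicit. Unset Printing Implicit Defensive.
Import Order.TTheory GRing.Theory Num.Theory.
Local Open Scope classical_set_scope.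
Local Open Scope ring_scope.

(** 2^omega with the product topology: the library's [cantor_space]
    (= prod_topology (fun _ : nat => bool)). *)

Definition nowhere_dense (T : topologicalType) (A : set T) : Prop :=
  interior (closure A) = set0.

Definition meager (T : topologicalType) (A : set T) : Prop :=
  exists N : nat -> set T,
    (forall n, nowhere_dense (N n)) /\ A `<=` \bigcup_n N n.

Definition cyl (s : seq bool) : set cantor_space :=
  [set x | forall i, (i < size s)%N -> x i = nth false s i].

Definition cyl_weight (s : seq bool) : Rdefinitions.R := (2 ^- size s)%R.

Definition lebesgue_outer (A : set cantor_space) : \bar Rdefinitions.R :=
  ereal_inf [set v | exists c : nat -> seq bool,
     A `<=` \bigcup_n cyl (c n) /\
     v = (\sum_(0 <= n <oo) (cyl_weight (c n))%:E)%E].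

Definition null_set (A : set cantor_space) : Prop := lebesgue_outer A = 0%E.

Definition lebesgue_measurable (A : set cantor_space) : Prop :=
  lebesgue_outer.-caratheodory A.

(** ** Cardinal characteristics, as minimal-cardinality witnesses *)
Definition eventually_le (f g : nat -> nat) : Prop :=
  exists N, forall n, (N <= n)%N -> (f n <= g n)%N.

Definition unbounded_family (F : set (nat -> nat)) : Prop :=
  ~ exists g, forall f, F f -> eventually_le f g.

Definition is_b_witness (F : set (nat -> nat)) : Prop :=
  unbounded_family F /\
  forall G : set (nat -> nat), unbounded_family G -> (F #<= G)%card.

Definition is_unif_witness (X : set cantor_space) : Prop :=
  ~ null_set X /\
  forall Y : set cantor_space, ~ null_set Y -> (X #<= Y)%card.

Definition unif_lt_b : Prop :=
  exists (X : set cantor_space) (F : set (nat -> nat)),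
    is_unif_witness X /\ is_b_witness F /\
    (X #<= F)%card /\ ~ (F #<= X)%card.

Definition is_filter (F : set (set nat)) : Prop :=
  [/\ F setT, ~ F set0,
      (forall A B, F A -> A `<=` B -> F B) &
      (forall A B, F A -> F B -> F (A `&` B))].

Definition nonprincipal (F : set (set nat)) : Prop :=
  forall A : set nat, finite_set (~` A) -> F A.

Definition filter_as_subset (F : set (set nat)) : set cantor_space :=
  [set x | F [set n | x n = true]].

(* Take a non-null set X of size unif and a nonprincipal ultrafilter U on omega,
   and let Z consist of the x in X or their complements, whichever lies in U: Z is
   non-null, |Z| <= unif < b, and finitely many members of Z have infinite
   intersection.  Let F be the filter generated by Z and the cofinite sets.

   F is not measurable: it is invariant under finite modifications, it contains Z
   and its complement contains the complements of the members of Z, so F and its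
   complement are both non-null.  By the zero-one law for such tail sets both have
   outer measure 1, while 2^omega has outer measure below 2.  The zero-one law is
   proved on covers: if a tail set Y had a cover of weight W < 1, some string t0 of
   length L avoids the first cylinders of the cover and the remaining ones meet
   [t0] in weight small compared to 2^-L; moving t0 to each of the 2^L strings of
   length L then yields arbitrarily light covers of Y.

   F is meager: since |Z| < b, one function dominates, for every finite s in Z,
   the search for an element of the intersection of s above a given bound.  This
   yields an interval partition of omega such that every member of F meets all but
   finitely many intervals, and the sets meeting every interval from the j-th on
   are nowhere dense. *)

From Pilot Require Import Defs.
From HB Require Import structures.
From mathcomp Require Import all_boot all_order all_algebra.
From mathcomp Require Import all_classical all_reals all_analysis.
From mathcomp Require Import Rstruct Rstruct_topology.
From mathcomp Require Import ring lra.
Set Implicit Arguments. Unset Strict Implicit. Unset Printing Implicit Defensive.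
Import Order.TTheory GRing.Theory Num.Theory.
Local Open Scope classical_set_scope.
Local Open Scope ring_scope.

Notation R := Rdefinitions.R.

Definition covers (c : nat -> seq bool) (A : set cantor_space) :=
  A `<=` \bigcup_n cyl (c n).

Definition cover_sum (c : nat -> seq bool) (N : nat) : R :=
  \sum_(0 <= n < N) cyl_weight (c n).

Lemma cyl_weight_ge0 s : 0 <= cyl_weight s.
Proof. by rewrite /cyl_weight invr_ge0 exprn_ge0. Qed.

Lemma cover_sum_le_series c N :
  ((cover_sum c N)%:E <= \sum_(0 <= n <oo) (cyl_weight (c n))%:E)%E.
Proof.
rewrite /cover_sum -sumEFin.
by apply: nneseries_lim_ge => n _ _; rewrite lee_fin cyl_weight_ge0.
Qed.

Lemma cover_series_le c b : (forall N, cover_sum c N <= b) ->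
  (\sum_(0 <= n <oo) (cyl_weight (c n))%:E <= b%:E)%E.
Proof.
move=> cb; apply: lime_le.
  by apply: is_cvg_nneseries => n _ _; rewrite lee_fin cyl_weight_ge0.
by apply: nearW => N; rewrite sumEFin lee_fin; apply: cb.
Qed.

Lemma null_setP A : Defs.null_set A <->
  forall e : R, 0 < e -> exists2 c, covers c A & forall N, cover_sum c N <= e.
Proof.
rewrite /Defs.null_set; split=> [A0 e e0|small].
  have : (lebesgue_outer A < e%:E)%E by rewrite A0 lte_fin.
  move=> /ereal_inf_lt [_ [c [cA ->]] ce]; exists c => // N.
  by rewrite -lee_fin; apply/ltW/(le_lt_trans (cover_sum_le_series c N)).
apply/eqP; rewrite eq_le; apply/andP; split.
  apply/lee_addgt0Pr => e e0; rewrite add0e.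
  have [c cA cb] := small e e0.
  apply: le_trans (cover_series_le cb).
  by apply: ereal_inf_lbound; exists c.
apply/ereal_infP => _ [c [_ ->]].
by apply: nneseries_ge0 => n _ _; rewrite lee_fin cyl_weight_ge0.
Qed.

Lemma null_set_subset A B : A `<=` B -> Defs.null_set B -> Defs.null_set A.
Proof.
move=> AB /null_setP B0; apply/null_setP => e /B0 [c cB cb].
by exists c => // x /AB /cB.
Qed.

Lemma lebesgue_outer_ge1 Y :
  (forall c (W : R), covers c Y -> W < 1 ->
     (forall N, cover_sum c N <= W) -> Defs.null_set Y) ->
  ~ Defs.null_set Y -> (1 <= lebesgue_outer Y)%E.
Proof.
move=> small_null Y_pos; apply/ereal_infP => _ [c [cY ->]].
rewrite leNgt; apply/negP => lt1; apply: Y_pos.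
set S := (\sum_(0 <= n <oo) _)%E in lt1.
have S_fin : S \is a fin_num.
  rewrite ge0_fin_numE ?(lt_trans lt1 (ltry _)) //.
  by apply: nneseries_ge0 => n _ _; rewrite lee_fin cyl_weight_ge0.
apply: (small_null c (fine S)) => //; first by rewrite -lte_fin fineK.
by move=> N; rewrite -lee_fin fineK //; apply: cover_sum_le_series.
Qed.

Lemma geometric_tail_le K M :
  \sum_(0 <= m < M) ((2 : R) ^- (m + K)) <= 2 * 2 ^- K.
Proof.
suff -> : 2 * 2 ^- K = \sum_(0 <= m < M) ((2 : R) ^- (m + K)) + 2 * 2 ^- (M + K).
  by rewrite lerDl mulr_ge0.
elim: M => [|M IH]; first by rewrite big_geq // add0r.
rewrite big_nat_recr //= -addrA IH; congr (_ + _).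
by rewrite addSn exprS invfM; field; apply/lt0r_neq0/exprn_gt0.
Qed.

Lemma lebesgue_outer_setT_le : (lebesgue_outer setT <= (3 / 2 : R)%:E)%E.
Proof.
pose c n := if n is m.+1 then nseq m.+2 false else [::].
apply: le_trans (cover_series_le (c := c) _).
  by apply: ereal_inf_lbound; exists c; split => // x _; exists 0%N => //= i.
case=> [|N]; first by rewrite /cover_sum big_geq //; lra.
rewrite /cover_sum big_nat_recl //= /cyl_weight /= expr0 invr1.
have -> : (3 / 2 : R) = 1 + 2 * 2 ^- 2 by field.
rewrite lerD2l; apply: le_trans (geometric_tail_le 2 N).
by apply: ler_sum_nat => i _; rewrite size_nseq addn2.
Qed.

Lemma cover_sum_split c N M : (N <= M)%N ->
  cover_sum c M = cover_sum c N + \sum_(N <= n < M) cyl_weight (c n).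
Proof. by move=> NM; rewrite /cover_sum (big_cat_nat (leq0n N) NM). Qed.

Lemma cover_sum_nondecreasing c : nondecreasing_seq (cover_sum c).
Proof. by apply: nondecreasing_series => n _ _; apply: cyl_weight_ge0. Qed.

Lemma cover_tail_small c (W d : R) : (forall N, cover_sum c N <= W) -> 0 < d ->
  exists N, forall M, \sum_(N <= n < M) cyl_weight (c n) <= d.
Proof.
move=> cW d0; pose E := [set cover_sum c N | N in [set: nat]].
have supE : has_sup E by split; [exists (cover_sum c 0), 0%N | exists W => _ [N _ <-]].
have [_ [N _ <-] ltN] := sup_adherent d0 supE.
exists N => M; have [MN|NM] := leqP M N; first by rewrite big_geq // ltW.
have := sup_upper_bound supE (ex_intro2 _ _ M I erefl).
rewrite /= (cover_sum_split c (ltnW NM)); lra.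
Qed.

Lemma cover_interleave (I : eqType) (ts : seq I) (d : I -> nat -> seq bool) (b : R) :
  ts != [::] -> (forall t, t \in ts -> forall N, cover_sum (d t) N <= b) ->
  exists2 e : nat -> seq bool, (forall t m, t \in ts -> exists n, e n = d t m) &
    forall N, cover_sum e N <= (size ts)%:R * b.
Proof.
case: ts => [//|t0 ts'] _; set ts := t0 :: ts'; set T := size ts => db.
pose e n := d (nth t0 ts (n %% T)%N) (n %/ T)%N.
have eE m j : (j < T)%N -> e (m * T + j)%N = d (nth t0 ts j) m.
  by move=> jT; rewrite /e modnMDl modn_small // divnMDl // divn_small // addn0.
exists e => [t m tin|N].
  by exists (m * T + index t ts)%N; rewrite eE ?index_mem // nth_index.
have blocks M : cover_sum e (M * T) = \sum_(0 <= j < T) cover_sum (d (nth t0 ts j)) M.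
  elim: M => [|M IH].
    by rewrite /cover_sum big_geq // big1 // => j _; rewrite big_geq.
  rewrite mulSn addnC (cover_sum_split _ (leq_addr T (M * T))) IH.
  rewrite -{1}[(M * T)%N]add0n big_addn addKn -big_split /=.
  apply: eq_big_nat => j /andP[_ jT].
  by rewrite /cover_sum big_nat_recr //= addnC eE.
apply: le_trans (cover_sum_nondecreasing e (leq_pmulr N (isT : 0 < T)%N)) _.
rewrite blocks (_ : T%:R * b = \sum_(0 <= j < T) b); last first.
  by rewrite sumr_const_nat subn0 mulr_natl.
by apply: ler_sum_nat => j /andP[_ jT]; apply/db/mem_nth.
Qed.

Lemma null_set_union A B : Defs.null_set A -> Defs.null_set B -> Defs.null_set (A `|` B).
Proof.
move=> /null_setP A0 /null_setP B0; apply/null_setP => e e0.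
have e20 : 0 < e / 2 by rewrite divr_gt0.
have [cA cAA cAb] := A0 _ e20; have [cB cBB cBb] := B0 _ e20.
have [|c cAB cb] := @cover_interleave _ [:: true; false]
  (fun t => if t then cA else cB) (e / 2) isT; first by case.
exists c => [x [/cAA|/cBB] [m _ xm]|N].
- by have [n cn] := cAB true m isT; exists n; rewrite ?cn.
- by have [n cn] := cAB false m isT; exists n; rewrite ?cn.
- by apply: le_trans (cb N) _; rewrite /=; lra.
Qed.

Definition flip (x : cantor_space) : cantor_space := negb \o x.

Lemma null_set_flip A : Defs.null_set A -> Defs.null_set (flip @^-1` A).
Proof.
move=> /null_setP A0; apply/null_setP => e /A0 [c cA cb].
exists (fun n => map negb (c n)) => [x /cA [n _ xn]|N].
  exists n => // i; rewrite size_map => ilt.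
  by rewrite (nth_map false) // -xn // negbK.
apply: le_trans (cb N); rewrite /cover_sum.
by under eq_bigr do rewrite /cyl_weight size_map.
Qed.

Lemma cyl_weight_le p q : (size p <= size q)%N -> cyl_weight q <= cyl_weight p.
Proof.
by move=> pq; rewrite /cyl_weight lef_pV2 ?posrE ?exprn_gt0 // ler_eXn2l // ltr1n.
Qed.

Lemma exists_inv_exp2_le (e : R) : 0 < e -> exists k, (2 : R) ^- k <= e.
Proof.
move=> e0; have : 0 <= e^-1 by rewrite invr_ge0 ltW.
move=> /archi_boundP; set n := Num.Def.archi_bound _ => ltn; exists n.
rewrite -[e]invrK lef_pV2 ?posrE ?exprn_gt0 ?invr_gt0 //.
apply/ltW/(lt_le_trans ltn); rewrite -natrX ler_nat.
by apply: ltnW; rewrite ltn_expl.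
Qed.

Lemma cylP p x : cyl p x <-> mkseq x (size p) = p.
Proof.
split=> [px|<- i]; last by rewrite size_mkseq => ip; rewrite nth_mkseq.
by apply: (@eq_from_nth _ false); rewrite size_mkseq // => i ip; rewrite nth_mkseq // px.
Qed.

Lemma cyl_mkseq x n : cyl (mkseq x n) x.
Proof. by apply/cylP; rewrite size_mkseq. Qed.

Lemma cyl_prefix p q x : cyl p x -> cyl q x -> (size p <= size q)%N -> prefix p q.
Proof.
move=> /cylP px /cylP qx pq; rewrite prefixE -px -qx /mkseq size_map size_iota.
by rewrite -map_take take_iota (minn_idPl pq).
Qed.

Lemma cyl_comparable p q x : cyl p x -> cyl q x -> prefix p q \/ prefix q p.
Proof.
move=> px qx; have [pq|/ltnW qp] := leqP (size p) (size q).
  by left; apply: cyl_prefix px qx pq.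
by right; apply: cyl_prefix qx px qp.
Qed.

Fixpoint bitseqs (L : nat) : seq (seq bool) :=
  if L is L'.+1 then map (cons false) (bitseqs L') ++ map (cons true) (bitseqs L')
  else [:: [::]].

Lemma size_bitseqs L : size (bitseqs L) = (2 ^ L)%N.
Proof. by elim: L => //= L IH; rewrite size_cat !size_map IH expnS mul2n addnn. Qed.

Lemma mem_bitseqs L t : (t \in bitseqs L) = (size t == L).
Proof.
have cons_inj (b : bool) : injective (cons b) by move=> ? ? [].
elim: L t => [|L IH] t; first by rewrite mem_seq1 size_eq0.
rewrite mem_cat; case: t => [|b t]; first by apply/negbTE/norP; split; apply/mapP => -[].
rewrite eqSS -IH; case: b; rewrite mem_map //.
  have /negbTE-> // : true :: t \notin map (cons false) (bitseqs L).
  by apply/mapP => -[].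
rewrite orbC; have /negbTE-> // : false :: t \notin map (cons true) (bitseqs L).
by apply/mapP => -[].
Qed.

Fixpoint cyl_meet_weight (p t : seq bool) {struct t} : R :=
  match t, p with
  | [::], _ => cyl_weight p
  | _ :: _, [::] => cyl_weight t
  | b :: t', a :: p' => if a == b then cyl_meet_weight p' t' / 2 else 0
  end.

Lemma cyl_weight_cons b p : cyl_weight (b :: p) = cyl_weight p / 2.
Proof. by rewrite /cyl_weight /= exprS invfM mulrC. Qed.

Lemma cyl_meet_weight_nil t : cyl_meet_weight [::] t = cyl_weight t.
Proof. by case: t. Qed.

Lemma cyl_meet_weight_ge0 p t : 0 <= cyl_meet_weight p t.
Proof.
elim: t p => [|b t IH] [|a p] /=; rewrite ?cyl_weight_ge0 //.
by case: eqP => _ //; rewrite divr_ge0.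
Qed.

Lemma cyl_meet_weight_prefixl t p : prefix t p -> cyl_meet_weight p t = cyl_weight p.
Proof.
elim: t p => [|b t IH] [|a p] //= /andP[/eqP-> tp].
by rewrite eqxx IH // cyl_weight_cons.
Qed.

Lemma cyl_meet_weight_prefixr p t : prefix p t -> cyl_meet_weight p t = cyl_weight t.
Proof.
elim: t p => [|b t IH] [|a p] //= /andP[/eqP-> pt].
by rewrite eqxx IH // cyl_weight_cons.
Qed.

Lemma sum_cyl_meet_weight L p :
  \sum_(t <- bitseqs L) cyl_meet_weight p t = cyl_weight p.
Proof.
elim: L p => [|L IH] p /=; first by rewrite big_seq1.
rewrite big_cat !big_map /=; case: p => [|a p].
  have half b : \sum_(j <- bitseqs L) cyl_weight (b :: j) = cyl_weight [::] / 2.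
    under eq_bigr do rewrite cyl_weight_cons -cyl_meet_weight_nil.
    by rewrite -mulr_suml IH.
  by rewrite !half -splitr.
by case: a => /=; rewrite big1_eq ?add0r ?addr0 -mulr_suml IH cyl_weight_cons.
Qed.

(** * A zero-one law for tail sets *)

Lemma count_prefixed_bitseqs (c : nat -> seq bool) N L :
  (count (fun t => has (fun n => prefix (c n) t) (iota 0 N)) (bitseqs L))%:R
    <= cover_sum c N * 2 ^+ L.
Proof.
set bad := fun t => _; rewrite -ler_pdivrMr ?exprn_gt0 //.
have -> : (count bad (bitseqs L))%:R / 2 ^+ L =
          \sum_(t <- bitseqs L | bad t) cyl_weight t.
  rewrite big_seq_cond (eq_bigr (fun=> 2 ^- L)); last first.
    by move=> t /andP[]; rewrite mem_bitseqs => /eqP <-.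
  by rewrite -big_seq_cond big_const_seq iter_addr addr0 mulr_natl.
have meet_ge0 t : 0 <= \sum_(0 <= n < N) cyl_meet_weight (c n) t.
  by rewrite sumr_ge0 // => n _; apply: cyl_meet_weight_ge0.
apply: le_trans (_ : _ <= \sum_(t <- bitseqs L | bad t)
                            \sum_(0 <= n < N) cyl_meet_weight (c n) t) _.
  apply: ler_sum => t /hasP[n nN /= cnt].
  rewrite (bigD1_seq n) ?iota_uniq ?/index_iota ?subn0 //=.
  rewrite cyl_meet_weight_prefixr // lerDl sumr_ge0 // => m _.
  exact: cyl_meet_weight_ge0.
apply: le_trans (_ : _ <= \sum_(t <- bitseqs L)
                            \sum_(0 <= n < N) cyl_meet_weight (c n) t) _.
  by rewrite [X in _ <= X](bigID bad) /= lerDl sumr_ge0.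
by rewrite exchange_big /=; under eq_bigr do rewrite sum_cyl_meet_weight.
Qed.

Lemma exists_below_average (I : eqType) (G : seq I) (f : I -> nat -> R) (d : R) :
  G != [::] -> (forall t, nondecreasing_seq (f t)) ->
  (forall M, \sum_(t <- G) f t M <= d) ->
  exists2 t, t \in G & forall M, f t M <= d / (size G)%:R.
Proof.
move=> G0 f_mono fd; apply: contrapT => none.
have /choice [Mt Mt_big] : forall t, exists M, t \in G -> d / (size G)%:R < f t M.
  move=> t; have [tG|] := boolP (t \in G); last by exists 0%N.
  have [M] : exists M, ~~ (f t M <= d / (size G)%:R).
    apply: contrapT => all_small; apply: none; exists t => // M.
    by apply: contrapT => /negP ?; apply: all_small; exists M.
  by rewrite -ltNge => lt; exists M.
pose M := \max_(t <- G) Mt t.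
have : \sum_(t <- G) d / (size G)%:R < \sum_(t <- G) f t M.
  rewrite big_seq_cond [X in _ < X]big_seq_cond; apply: ltr_sum.
    case: G {fd none Mt Mt_big M} G0 => // t G _.
    by apply/hasP; exists t; rewrite ?mem_head.
  move=> t /andP[tG _]; apply: lt_le_trans (Mt_big t tG) (f_mono _ _ _ _).
  exact: (@leq_bigmax_seq _ _ xpredT).
rewrite big_const_seq iter_addr addr0 count_predT -[_ *+ size G]mulr_natr divfK.
  by rewrite ltNge fd.
by rewrite pnatr_eq0 size_eq0.
Qed.

Lemma cover_restrict_cyl A t0 c (b delta : R) : A `<=` cyl t0 -> covers c A ->
  (forall N, \sum_(0 <= n < N) cyl_meet_weight (c n) t0 <= b) -> 0 < delta ->
  exists2 e, covers e A & forall N, cover_sum e N <= b + delta.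
Proof.
move=> At0 cA cb delta0.
have [k kdelta] := exists_inv_exp2_le (divr_gt0 delta0 (ltr0Sn _ 1)).
(* cylinders disjoint from [cyl t0] are traded for dummies of weight 2^-(m+k) *)
pose e m := if prefix t0 (c m) then c m
            else if prefix (c m) t0 then t0 else nseq (m + k) false.
exists e => [x Ax|N].
  have [n _ xn] := cA x Ax; exists n => //; rewrite /e.
  case: ifP => // not_t0c; case: ifP => [_|not_ct0]; first exact: At0.
  by case: (cyl_comparable xn (At0 x Ax)); rewrite ?not_t0c ?not_ct0.
have e_weight m : cyl_weight (e m) <= cyl_meet_weight (c m) t0 + 2 ^- (m + k).
  rewrite /e; case: ifP => [/cyl_meet_weight_prefixl->|_].
    by rewrite lerDl invr_ge0 exprn_ge0.
  case: ifP => [/cyl_meet_weight_prefixr->|_].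
    by rewrite lerDl invr_ge0 exprn_ge0.
  by rewrite /cyl_weight size_nseq lerDr cyl_meet_weight_ge0.
apply: le_trans (ler_sum_nat (fun m _ => e_weight m)) _.
rewrite big_split /=; apply: lerD => //.
by apply: le_trans (geometric_tail_le k N) _; rewrite -ler_pdivlMl // mulrC.
Qed.

Definition tail_eq (x y : cantor_space) := exists m, forall i, (m <= i)%N -> x i = y i.

Definition tail_invariant (Y : set cantor_space) := forall x y, tail_eq x y -> Y x -> Y y.

Lemma tail_invariant_cover_from_cyl Y t0 c (b : R) : tail_invariant Y ->
  covers c (Y `&` cyl t0) -> (forall N, cover_sum c N <= b) ->
  exists2 e, covers e Y & forall N, cover_sum e N <= 2 ^+ size t0 * b.
Proof.
move=> tY cY cb; set L := size t0.
pose move_to t p := if prefix t0 p then t ++ drop L p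
                    else if prefix p t0 then t else p.
have move_to_weight t p : size t = L -> cyl_weight (move_to t p) <= cyl_weight p.
  move=> tL; rewrite /move_to; case: ifP => [/prefixP[q ->]|_].
    by rewrite drop_size_cat // /cyl_weight !size_cat tL.
  case: ifP => [/prefixP[q t0E] | _] //; apply: cyl_weight_le.
  by rewrite tL /L t0E size_cat leq_addr.
have [||e eE eb] := @cover_interleave _ (bitseqs L) (fun t m => move_to t (c m)) b.
- by rewrite -size_eq0 size_bitseqs expn_eq0.
- move=> t; rewrite mem_bitseqs => /eqP tL N; apply: le_trans (cb N).
  by apply: ler_sum_nat => m _; apply: move_to_weight.
exists e => [x Yx|N]; last by rewrite size_bitseqs natrX in eb.
pose x' i := if (i < L)%N then nth false t0 i else x i.
have x't0 : cyl t0 x' by move=> i iL; rewrite /x' iL.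
have Yx' : Y x' by apply: tY Yx; exists L => i; rewrite /x' ltnNge => ->.
have [n _ cnx'] := cY x' (conj Yx' x't0).
have [|m em] := eE (mkseq x L) n; first by rewrite mem_bitseqs size_mkseq.
exists m => //; rewrite em /move_to.
case: ifP => [/prefixP[q cnE]|not_t0c]; last case: ifP => [_|not_ct0].
- move=> i; rewrite size_cat size_mkseq => iLq; rewrite nth_cat size_mkseq.
  case: ifP => iL; first by rewrite nth_mkseq.
  move: iLq; rewrite cnE drop_size_cat // => iLq.
  by have := cnx' i; rewrite cnE nth_cat size_cat -/L /x' iL; apply.
- exact: cyl_mkseq.
- by case: (cyl_comparable cnx' x't0); rewrite ?not_t0c ?not_ct0.
Qed.

Lemma exists_string_avoiding_cover c N L (W d : R) : W < 1 ->
  cover_sum c N <= W -> (forall M, \sum_(N <= n < M) cyl_weight (c n) <= d) ->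
  exists t0, [/\ size t0 = L, ~~ has (fun n => prefix (c n) t0) (iota 0 N) &
    forall M, \sum_(N <= n < M) cyl_meet_weight (c n) t0 <= d / ((1 - W) * 2 ^+ L)].
Proof.
move=> W1 cW tailN; pose bad t := has (fun n => prefix (c n) t) (iota 0 N).
pose G := [seq t <- bitseqs L | ~~ bad t]; pose g : R := (size G)%:R.
have G_large : (1 - W) * 2 ^+ L <= g.
  have bad_le := count_prefixed_bitseqs c N L; rewrite -/bad in bad_le.
  have sizes : (count bad (bitseqs L))%:R + g = 2 ^+ L.
    by rewrite /g size_filter -natrD count_predC size_bitseqs natrX.
  have := ler_wpM2r (exprn_ge0 L (ler0n R 2)) cW.
  rewrite mulrBl mul1r; lra.
have G_pos : 0 < (1 - W) * 2 ^+ L by rewrite mulr_gt0 ?subr_gt0 ?exprn_gt0.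
have [|||t0 t0G t0_tail] := @exists_below_average _ G
    (fun t M => \sum_(N <= n < M) cyl_meet_weight (c n) t) d.
- by rewrite -size_eq0 -lt0n -(ltr0n R) (lt_le_trans G_pos).
- by move=> t; apply: nondecreasing_series => n _ _; apply: cyl_meet_weight_ge0.
- move=> M; rewrite big_filter; apply: le_trans (tailN M).
  apply: le_trans (_ : _ <= \sum_(t <- bitseqs L)
                              \sum_(N <= n < M) cyl_meet_weight (c n) t) _.
    rewrite [X in _ <= X](bigID bad) /= lerDr.
    by do 2 (apply: sumr_ge0 => ? _); apply: cyl_meet_weight_ge0.
  by rewrite exchange_big /=; under eq_bigr do rewrite sum_cyl_meet_weight.
move: t0G; rewrite mem_filter mem_bitseqs => /andP[t0_good /eqP t0L].
exists t0; split=> // M; apply: le_trans (t0_tail M) _.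
have d0 : 0 <= d by have := tailN N; rewrite big_geq.
by rewrite ler_wpM2l // lef_pV2 ?posrE // (lt_le_trans G_pos).
Qed.

Lemma tail_invariant_null Y c (W : R) : tail_invariant Y -> covers c Y -> W < 1 ->
  (forall N, cover_sum c N <= W) -> Defs.null_set Y.
Proof.
move=> tY cY W1 cW; apply/null_setP => e e0.
pose d := e * (1 - W) / 4.
have d0 : 0 < d by rewrite !mulr_gt0 ?subr_gt0.
have [N tailN] := cover_tail_small cW d0.
pose L := \max_(n < N) size (c n).
have [t0 [t0L t0_good t0_tail]] := exists_string_avoiding_cover L W1 (cW N) tailN.
have cYt0 : covers (fun m => c (N + m)%N) (Y `&` cyl t0).
  move=> x [Yx xt0]; have [n _ xn] := cY x Yx.
  suff Nn : (N <= n)%N by exists (n - N)%N; rewrite ?subnKC.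
  rewrite leqNgt; apply/negP => nN; move/negP: t0_good; apply.
  apply/hasP; exists n; first by rewrite mem_iota.
  apply: cyl_prefix xn xt0 _; rewrite t0L.
  exact: (@leq_bigmax _ (fun i : 'I_N => size (c i)) (Ordinal nN)).
pose delta := e / (4 * 2 ^+ L).
have [||c' c'Y c'b] := cover_restrict_cyl (b := d / ((1 - W) * 2 ^+ L))
    (@subIsetr _ Y (cyl t0)) cYt0 _ (_ : 0 < delta).
- move=> M; apply: le_trans (t0_tail (N + M)%N).
  by rewrite -{2}[N]add0n big_addn addKn; under [X in _ <= X]eq_bigr do rewrite addnC.
- by rewrite divr_gt0 ?mulr_gt0 ?exprn_gt0.
have [e' e'Y e'b] := tail_invariant_cover_from_cyl tY c'Y c'b.
exists e' => // M; apply: le_trans (e'b M) _; rewrite t0L.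
have -> : 2 ^+ L * (d / ((1 - W) * 2 ^+ L) + delta) = e / 2.
  by rewrite /d /delta; field; rewrite expf_neq0 //= subr_eq0 (gt_eqF W1).
lra.
Qed.

Lemma tail_invariant_outer_ge1 Y :
  tail_invariant Y -> ~ Defs.null_set Y -> (1 <= lebesgue_outer Y)%E.
Proof. by move=> tY; apply: lebesgue_outer_ge1 => c W; apply: tail_invariant_null. Qed.

Lemma tail_invariantC Y : tail_invariant Y -> tail_invariant (~` Y).
Proof.
by move=> tY x y [m xy] nYx Yy; apply/nYx/(tY y) => //; exists m => i /xy ->.
Qed.

Lemma tail_invariant_not_measurable Y : tail_invariant Y ->
  ~ Defs.null_set Y -> ~ Defs.null_set (~` Y) -> ~ lebesgue_measurable Y.
Proof.
move=> tY Y_pos CY_pos /(_ setT); rewrite !setTI => splitT.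
have := leeD (tail_invariant_outer_ge1 tY Y_pos)
             (tail_invariant_outer_ge1 (tail_invariantC tY) CY_pos).
rewrite -splitT => /le_trans /(_ lebesgue_outer_setT_le).
by rewrite -EFinD lee_fin; lra.
Qed.

(** * Nowhere dense sets of the Cantor space *)

Lemma meagerS (T : topologicalType) (A B : set T) : A `<=` B -> meager B -> meager A.
Proof. by move=> AB [N [Nnd BN]]; exists N; split => // x /AB /BN. Qed.

Lemma cyl_nbhs t x : cyl t x -> nbhs x (cyl t).
Proof.
move=> tx; suff : nbhs x [set y : cantor_space | forall i, (i < size t)%N -> y i = x i].
  by apply: filterS => y yx i it; rewrite yx ?tx.
elim: (size t) => [|n IH]; first by apply: filterS filterT => y _ i.
have coord_n : nbhs x [set y : cantor_space | y n = x n].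
  exact: (@proj_continuous nat (fun _ => bool) n x [set x n] (discrete_set1 _)).
apply: filterS (filterI IH coord_n) => y [yx yn] i.
by rewrite ltnS leq_eqVlt => /orP[/eqP->|/yx].
Qed.

Lemma nowhere_dense_cantor (A : set cantor_space) :
  (forall s, exists2 t, prefix s t & cyl t `&` A = set0) -> nowhere_dense A.
Proof.
move=> ext; rewrite /nowhere_dense -subset0 => p /= pA.
have /choice [t tP] : forall m, exists t, prefix (mkseq p m) t /\ cyl t `&` A = set0.
  by move=> m; have [t] := ext (mkseq p m); exists t.
pose q m i := nth (p i) (t m) i.
have q_cyl m : cyl (t m) (q m) by move=> i it; rewrite /q (set_nth_default false).
have q_p : q @ \oo --> p.
  apply/(@pointwise_cvgP nat bool) => i; apply/discrete_cvg; exists i.+1 => // m /= im.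
  rewrite /q; have [s ->] := prefixP (tP m).1.
  by rewrite nth_cat size_mkseq im nth_mkseq.
have [m _ /(_ m (leqnn m)) qA] := q_p _ pA.
have [y [Ay ty]] := qA _ (cyl_nbhs (q_cyl m)).
by have : (cyl (t m) `&` A) y by []; rewrite (tP m).2.
Qed.

Definition hits_blocks_from (bs : nat -> nat) (j : nat) : set cantor_space :=
  [set x | forall k, (j <= k)%N -> exists2 i, (bs k <= i < bs k.+1)%N & x i].

Lemma nowhere_dense_hits_blocks bs j : (forall k, (k <= bs k)%N) ->
  nowhere_dense (hits_blocks_from bs j).
Proof.
move=> bs_ge; apply: nowhere_dense_cantor => s; pose k := maxn j (size s).
exists (s ++ nseq (bs k.+1 - size s) false); first exact: prefix_prefix.
rewrite -subset0 => y [sy /(_ k (leq_maxl _ _)) [i /andP[ki ik1] yi]].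
have si : (size s <= i)%N := leq_trans (leq_maxr j _) (leq_trans (bs_ge k) ki).
move: (sy i); rewrite size_cat size_nseq subnKC ?ik1; last exact: leq_trans si (ltnW ik1).
by rewrite nth_cat ltnNge si nth_nseq if_same yi => /(_ isT).
Qed.

Lemma meager_hits_blocks bs : (forall k, (k <= bs k)%N) ->
  meager [set x | exists j, hits_blocks_from bs j x].
Proof.
move=> bs_ge; exists (hits_blocks_from bs); split => [j|x [j xj]].
  exact: nowhere_dense_hits_blocks.
by exists j.
Qed.

(** * Families indexed by sets smaller than b *)

Lemma eventually_le_trans f g h :
  eventually_le f g -> eventually_le g h -> eventually_le f h.
Proof.
move=> [N1 fg] [N2 gh]; exists (maxn N1 N2) => n; rewrite geq_max => /andP[n1 n2].
exact: leq_trans (fg n n1) (gh n n2).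
Qed.

Definition below_b (T : Type) (Z : set T) :=
  forall h : T -> nat -> nat, exists g, forall z, Z z -> eventually_le (h z) g.

Lemma below_b_of_card_lt (T : Type) (F : set (nat -> nat)) (Z : set T) :
  is_b_witness F -> ~ (F #<= Z)%card -> below_b Z.
Proof.
move=> [_ F_min] not_FZ h; apply: contrapT => unbounded.
apply/not_FZ/(card_le_trans (F_min _ _) (card_image_le h Z)).
by move=> [g hg]; apply: unbounded; exists g => z Zz; apply: hg; exists z.
Qed.

Lemma below_b_seq (T : eqType) (Z : set T) :
  below_b Z -> below_b [set s : seq T | [set` s] `<=` Z].
Proof.
move=> Zb.
have fixed_size n (h : seq T -> nat -> nat) : exists g, forall s,
    size s = n -> [set` s] `<=` Z -> eventually_le (h s) g.
  elim: n h => [|n IH] h; first by exists (h [::]) => -[|//] _ _; exists 0%N.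
  have /choice [gz gzP] : forall z, exists g, forall s,
      size s = n -> [set` s] `<=` Z -> eventually_le (h (z :: s)) g.
    by move=> z; apply: IH.
  have [g gP] := Zb gz; exists g => -[//|z s] [sn] zsZ.
  apply: eventually_le_trans (gP z (zsZ z (mem_head z s))).
  by apply: gzP => // y ys; apply: zsZ; rewrite /= in_cons ys orbT.
move=> h; have /choice [gn gnP] := fun n => fixed_size n h.
exists (fun k => \max_(i < k.+1) gn i k) => s sZ.
apply: eventually_le_trans (gnP (size s) s erefl sZ) _; exists (size s) => k sk.
exact: (@leq_bigmax _ (fun i : 'I_k.+1 => gn i k) (Ordinal (sk : (size s < k.+1)%N))).
Qed.

(** * Filters generated by the cofinite sets and a family of subsets *)

Definition all_true (s : seq cantor_space) (i : nat) : bool := all (fun z => z i) s.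

Definition filter_gen_cofinite (Z : set cantor_space) : set (set nat) :=
  [set A | exists s m, [set` s] `<=` Z /\
                      forall i, (m <= i)%N -> all_true s i -> A i].

Lemma filter_gen_cofinite_nonprincipal Z : nonprincipal (filter_gen_cofinite Z).
Proof.
move=> A /finite_seqP [s sE]; exists [::], (\max_(x <- s) x.+1); split => // i iA _.
apply: contrapT => nAi; have /= si : [set` s] i by rewrite -sE.
by have := leq_trans (@leq_bigmax_seq _ s xpredT succn i si isT) iA; rewrite ltnn.
Qed.

Lemma filter_gen_cofinite_tail_invariant Z :
  tail_invariant (filter_as_subset (filter_gen_cofinite Z)).
Proof.
move=> x y [m0 xy] [s [m [sZ sx]]]; exists s, (maxn m m0); split => // i.
by rewrite geq_max => /andP[mi m0i] si; rewrite /= -xy //; apply: sx.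
Qed.

Section GeneratedFilter.
Variables (U : set_system nat) (Z : set cantor_space).
Hypothesis U_proper : ProperFilter U.
Hypothesis U_tails : forall m, U [set n | (m <= n)%N].
Hypothesis Z_in_U : forall z, Z z -> U [set n | z n].

Lemma U_all_true s : [set` s] `<=` Z -> U [set i | all_true s i].
Proof.
elim: s => [_|z s IH sZ]; first by apply: filterS filterT.
have sZ' : [set` s] `<=` Z by move=> y ys; apply: sZ; rewrite /= in_cons ys orbT.
by apply: filterS (filterI (Z_in_U (sZ z (mem_head z s))) (IH sZ')) => i [/= -> ->].
Qed.

Lemma exists_all_true s m : [set` s] `<=` Z -> exists i, (m <= i)%N /\ all_true s i.
Proof.
by move=> /U_all_true sU; apply: filter_ex (filterI (U_tails m) sU).
Qed.

Lemma filter_gen_cofinite_filter : is_filter (filter_gen_cofinite Z).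
Proof.
split.
- by exists [::], 0%N.
- by move=> [s [m [sZ s0]]]; have [i [mi si]] := exists_all_true m sZ; apply: s0 si.
- by move=> A B [s [m [sZ sA]]] AB; exists s, m; split => // i mi /(sA i mi) /AB.
- move=> A B [s1 [m1 [s1Z s1A]]] [s2 [m2 [s2Z s2B]]].
  exists (s1 ++ s2), (maxn m1 m2); split.
    by move=> z /=; rewrite mem_cat => /orP[/s1Z|/s2Z].
  move=> i; rewrite geq_max /all_true all_cat => /andP[mi1 mi2] /andP[si1 si2].
  by split; [apply: s1A | apply: s2B].
Qed.

Lemma filter_gen_cofinite_not_measurable : ~ Defs.null_set Z ->
  ~ lebesgue_measurable (filter_as_subset (filter_gen_cofinite Z)).
Proof.
move=> Z_pos; apply: tail_invariant_not_measurable.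
- exact: filter_gen_cofinite_tail_invariant.
- apply: contra_not Z_pos; apply: null_set_subset => z Zz.
  exists [:: z], 0%N; rewrite set_cons1; split => [y -> //|i _ /andP[] //].
- apply: contra_not Z_pos => /null_set_flip; apply: null_set_subset => z Zz /=.
  move=> [s [m [sZ sz]]].
  have [i [[mi si] zi]] :=
    filter_ex (filterI (filterI (U_tails m) (U_all_true sZ)) (Z_in_U Zz)).
  by move: (sz i mi si); rewrite /flip /= zi.
Qed.

Lemma filter_gen_cofinite_meager :
  below_b Z -> meager (filter_as_subset (filter_gen_cofinite Z)).
Proof.
move=> /below_b_seq Zb.
have /choice [next nextP] : forall s, exists f : nat -> nat,
    [set` s] `<=` Z -> forall k, (k <= f k)%N /\ all_true s (f k).
  move=> s; have [sZ|] := pselect ([set` s] `<=` Z); last by exists id.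
  by have /choice [f fP] := fun k => exists_all_true k sZ; exists f.
have [g gP] := Zb next.
pose fix bs k := if k is k'.+1 then ((bs k').+1 + g (bs k'))%N else 0%N.
have bs_ge k : (k <= bs k)%N.
  by elim: k => //= k IH; rewrite ltnS (leq_trans IH) ?leq_addr.
apply: meagerS (meager_hits_blocks bs_ge) => x [s [m [sZ sx]]].
have [N gN] := gP s sZ; exists (maxn m N) => k; rewrite geq_max => /andP[mk Nk].
have [bs_next all_next] := nextP s sZ (bs k).
exists (next s (bs k)).
  by rewrite bs_next /= addSn ltnS (leq_trans (gN _ (leq_trans Nk (bs_ge k)))) ?leq_addl.
by apply: sx all_next; rewrite (leq_trans mk (leq_trans (bs_ge k) bs_next)).
Qed.
End GeneratedFilter.

Theorem theorem2p4 :
  unif_lt_b ->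
  exists F : set (set nat),
    [/\ is_filter F, nonprincipal F,
        meager (filter_as_subset F) &
        ~ lebesgue_measurable (filter_as_subset F)].
Proof.
move=> [X [F [[X_pos _] [F_b [_ not_FX]]]]].
have [U [U_ultra tails_U]] := @ultraFilterLemma nat \oo eventually_filter.
have U_proper : ProperFilter U by case: U_ultra.
have U_tails m : U [set n | (m <= n)%N] by apply: tails_U; exists m.
pose U_side (x : cantor_space) : cantor_space :=
  if `[< U [set n | x n] >] then x else flip x.
pose Z := U_side @` X.
have Z_in_U z : Z z -> U [set n | z n].
  move=> [x _ <-]; rewrite /U_side; case: ifPn => [/asboolP //|/asboolP xU].
  have [//|] := in_ultra_setVsetC [set n | x n] U_ultra.
  by apply: filterS => n /negP /negbTE; rewrite /flip /= => ->.
have Z_pos : ~ Defs.null_set Z.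
  move=> Z0; apply: X_pos; have := null_set_union Z0 (null_set_flip Z0).
  apply: null_set_subset => x Xx.
  have : Z (U_side x) by exists x.
  by rewrite /U_side; case: ifP => _ Zx; [left|right].
have Z_below_b : below_b Z.
  apply: (below_b_of_card_lt F_b) => FZ.
  exact/not_FX/(card_le_trans FZ)/card_image_le.
exists (filter_gen_cofinite Z); split.
- exact: filter_gen_cofinite_filter U_proper U_tails Z_in_U.
- exact: filter_gen_cofinite_nonprincipal.
- exact: filter_gen_cofinite_meager U_proper U_tails Z_in_U Z_below_b.
- exact: filter_gen_cofinite_not_measurable U_proper U_tails Z_in_U Z_pos.
Qed.
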